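(* For any finite tree $T$ and any integer $k\geq 1$, $\mathrm{box}(T^k)\leq k+1$.
   Context: $T^k$ is the $k$-th power of $T$: the graph on $V(T)$ in which distinct $u,v$ are adjacent iff their distance in $T$ is at most $k$. The boxicity $\mathrm{box}(G)$ of a graph $G$ is the minimum integer $t$ such that $G$ is the intersection graph of axis-parallel $t$-dimensional boxes (Cartesian products of $t$ closed real intervals), i.e. there is a map $f$ from $V(G)$ to such boxes with $(u,v)\in E(G)\iff f(u)\cap f(v)\neq\emptyset$ for distinct $u,v$. *)

From Stdlib Require Import Reals.
From mathcomp Require Import all_boot.
Set Implicit Arguments. Unset Strict Implicit. Unset Printing Implicit Defensive.

Definition simple_graph (T : finType) (e : rel T) : Prop :=
  symmetric e /\ irreflexive e.

Definition connected_graph (T : finType) (e : rel T) : Prop :=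
  forall x y : T, connect e x y.

Definition acyclic_graph (T : finType) (e : rel T) : Prop :=
  forall c : seq T, ~ (ucycle e c /\ 2 < size c).

Definition is_tree (T : finType) (e : rel T) : Prop :=
  [/\ simple_graph e, 0 < #|T|, connected_graph e & acyclic_graph e].

(* dist_T(u,v) <= k : there is a walk from u to v with at most k edges. *)
Definition dist_le (T : finType) (e : rel T) (k : nat) (u v : T) : bool :=
  [exists p : (k.+1).-tuple T, exists j : 'I_k.+1,
     path e u (take j p) && (last u (take j p) == v)].

Definition graph_pow (T : finType) (e : rel T) (k : nat) : rel T :=
  fun u v => (u != v) && dist_le e k u v.

(* A t-dimensional box: for each coordinate i, the closed interval
   [fst (b i), snd (b i)] with fst (b i) <= snd (b i). *)
Definition box (t : nat) := 'I_t -> (R * R).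
Definition valid_box (t : nat) (b : box t) : Prop :=
  forall i, Rle (fst (b i)) (snd (b i)).
Definition boxes_meet (t : nat) (b1 b2 : box t) : Prop :=
  forall i, Rle (Rmax (fst (b1 i)) (fst (b2 i))) (Rmin (snd (b1 i)) (snd (b2 i))).

Definition box_rep (T : finType) (e : rel T) (t : nat) : Prop :=
  exists f : T -> box t,
    (forall v, valid_box (f v)) /\
    (forall u v, u != v -> (e u v <-> boxes_meet (f u) (f v))).

Definition boxicity_le (T : finType) (e : rel T) (m : nat) : Prop :=
  exists t, (t <= m)%N /\ box_rep e t.

From Stdlib Require Import Reals.
From mathcomp Require Import all_boot order zify.
Import Order.TTheory.
Set Implicit Arguments. Unset Strict Implicit. Unset Printing Implicit Defensive.

(* Root the tree and list its vertices in depth-first preorder (lexicographic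
   order of root-to-vertex paths).  Every subtree is then an interval
   [pos x, endp x] of positions.  In T^k, u and v (with pos u < pos v) are
   adjacent iff they have ancestors u_i, v_j with u_i = v_j and i + j <= k;
   along the chain of ancestors this is equivalent to: for each i <= k,
   either the (k-i)-th ancestor of v is an ancestor of u, or (for i > 0) the
   (i-1)-th ancestor of u is an ancestor of v.  The i-th box side of v is the
   interval from the position of its (k-i)-th ancestor to the end of the
   subtree of its (i-1)-th ancestor (or to pos v when i = 0), and its
   intersection with the i-th side of u is exactly the i-th condition. *)

Lemma lexi_catr d (T : porderType d) (p q : seqlexi T) : (p <= p ++ q)%O.
Proof. by elim: p => //= a p IH; rewrite lexi_cons lexx. Qed.

Lemma lexi_prefix d (T : porderType d) (p q w : seqlexi T) :
  (p <= w)%O -> (w <= p ++ q)%O -> exists s, w = p ++ s.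
Proof.
elim: p w => [|a p IH] [|b w] //=; first by exists [::].
  by exists (b :: w).
rewrite !lexi_cons => /andP[ab +] /andP[ba +].
rewrite ab ba /= => pw wq; have [s ->] := IH _ pw wq.
by exists s; rewrite (@le_anti _ _ a b) ?ab ?ba.
Qed.

Section Rank.
Variables (T : finType) (d : Order.disp_t) (O : orderType d) (f : T -> O).

Definition rank v := #|[pred w | (f w < f v)%O]|.

Lemma rank_ltE u v : (rank u < rank v) = (f u < f v)%O.
Proof.
apply/idP/idP => [|uv]; last first.
  apply: proper_card; apply/properP; split.
    by apply/subsetP => w; rewrite !inE => /lt_trans; apply.
  by exists u; rewrite !inE ?uv ?ltxx.
apply: contraTT; rewrite -leNgt -leqNgt => vu.
apply: subset_leq_card; apply/subsetP => w; rewrite !inE => /lt_le_trans.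
exact.
Qed.

Lemma rank_leE u v : (rank u <= rank v) = (f u <= f v)%O.
Proof. by rewrite leqNgt rank_ltE -leNgt. Qed.

Lemma rank_inj : injective f -> injective rank.
Proof.
move=> finj u v uv; apply: finj; apply/le_anti.
by rewrite -!rank_leE uv leqnn.
Qed.

End Rank.

Lemma nat_pred_switch (P : pred nat) n :
  P 0 -> ~~ P n -> exists2 m, m < n & P m && ~~ P m.+1.
Proof.
elim: n => [|n IH] P0 Pn; first by rewrite P0 in Pn.
case Pn': (P n); first by exists n; rewrite ?Pn'.
by have [m mn Pm] := IH P0 (negbT Pn'); exists m => //; apply: ltnW.
Qed.

Lemma Rmax_le_Rmin a b c d :
  Rle (Rmax a b) (Rmin c d) <-> [/\ Rle a c, Rle a d, Rle b c & Rle b d].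
Proof.
split=> [h|[ac ad bc bd]]; last by apply: Rmax_lub; apply: Rmin_glb.
have le_max_min x y : Rle x (Rmax a b) -> Rle (Rmin c d) y -> Rle x y.
  by move=> xm my; apply: Rle_trans xm (Rle_trans _ _ _ h my).
split; apply: le_max_min;
  solve [exact: Rmax_l | exact: Rmax_r | exact: Rmin_l | exact: Rmin_r].
Qed.

Section Walks.
Variables (T : finType) (e : rel T).

Definition walk_le x y n := exists p, [/\ size p <= n, path e x p & last x p = y].

Lemma walk_le_cat x y z m n : walk_le x y m -> walk_le y z n -> walk_le x z (m + n).
Proof.
move=> [p [sp pp lp]] [q [sq pq lq]]; exists (p ++ q).
by rewrite size_cat cat_path last_cat lp pp pq lq leq_add.
Qed.

Lemma dist_leP k u v : reflect (walk_le u v k) (dist_le e k u v).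
Proof.
apply: (iffP existsP) => [[p /existsP [j /andP[pp /eqP lp]]]|[p [sp pp lp]]].
  exists (take j p); split => //; rewrite size_take size_tuple.
  by have := ltn_ord j; case: ifP; lia.
have hs : size (p ++ nseq (k.+1 - size p) u) == k.+1.
  by rewrite size_cat size_nseq; apply/eqP; lia.
exists (Tuple hs); apply/existsP; exists (Ordinal (leq_ltn_trans sp (ltnSn k))).
by rewrite /= take_size_cat // pp lp eqxx.
Qed.

End Walks.

Section Tree.
Variables (T : finType) (e : rel T).
Hypotheses (e_sym : symmetric e) (e_irr : irreflexive e) (e_acyc : acyclic_graph e).

Lemma uniq_path_no_back_edge a p y : path e a p -> uniq (a :: p) -> y \in p ->
  y != head a p -> ~~ e y a.
Proof.
move=> pp up yp yh; apply/negP => eya.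
have iP : index y p < size p by rewrite index_mem.
have i0 : 0 < index y p.
  by case: p pp up yp yh iP => [|x p] //= _ _ _; rewrite eq_sym => /negbTE ->.
have hc : take (index y p).+1 p = rcons (take (index y p) p) y.
  by rewrite (take_nth y iP) nth_index.
apply: (@e_acyc (a :: take (index y p).+1 p)); split.
  rewrite /ucycle /= hc rcons_path -hc take_path //= hc last_rcons eya /= -hc.
  move: up => /= /andP[ap up].
  by rewrite take_uniq // andbT; apply: contra ap; exact: mem_take.
by rewrite /= size_take; case: ifP => _; rewrite ltnS //; exact: leq_ltn_trans iP.
Qed.

Lemma uniq_paths_no_fork a x y p q : e a x -> e a y -> x != y ->
  path e x p -> path e y q -> uniq (a :: x :: p) -> uniq (a :: y :: q) ->
  last x p != last y q.
Proof.
elim: q a x y p => [|y' q IH] a x y p eax eay xy px py ux uy; apply/eqP => hl.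
  have : ~~ e y a; last by rewrite e_sym eay.
  apply: (@uniq_path_no_back_edge _ (x :: p)) => //=; first by rewrite eax.
    by rewrite [y in y \in _](_ : y = last x p) ?mem_last // hl.
  by rewrite eq_sym.
have [yP|yP] := boolP (y \in x :: p).
  have : ~~ e y a; last by rewrite e_sym eay.
  apply: (@uniq_path_no_back_edge _ (x :: p)) => //=; first by rewrite eax.
  by rewrite eq_sym.
move: py => /= /andP[eyy' py'].
suff : last a (x :: p) != last y' q by rewrite /= hl eqxx.
apply: (IH y a y' (x :: p)) => //.
- by rewrite e_sym.
- by move: uy; rewrite /= !inE !negb_or => /and3P[/and3P[_ -> _] _ _].
- by rewrite /= eax.
- move: ux uy yP; rewrite /= !inE !negb_or => -> /and3P[/and3P[ay _ _] _ _] ->.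
  by rewrite eq_sym ay.
- by move: uy; rewrite /= => /andP[_ ->].
Qed.

Lemma uniq_path_eq a p q : path e a p -> path e a q -> uniq (a :: p) ->
  uniq (a :: q) -> last a p = last a q -> p = q.
Proof.
elim: p a q => [|x p IH] a [|y q] //= pp pq up uq hl.
- by move: uq => /andP[/negP[]]; rewrite hl; exact: mem_last.
- by move: up => /andP[/negP[]]; rewrite -hl; exact: mem_last.
case/andP: pp => eax px; case/andP: pq => eay py.
have [xy|xy] := eqVneq x y; last first.
  by move: (uniq_paths_no_fork eax eay xy px py up uq); rewrite hl eqxx.
subst y; congr (_ :: _); apply: (IH x) => //.
- by case/andP: up.
- by case/andP: uq.
Qed.

Hypothesis e_conn : connected_graph e.
Variable r : T.

Lemma exists_dist_le_root v : exists n, dist_le e n r v.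
Proof.
have /connectP [p pp lp] := e_conn r v.
by exists (size p); apply/dist_leP; exists p.
Qed.

Definition depth v := ex_minn (exists_dist_le_root v).

Lemma depth_min n v : dist_le e n r v -> depth v <= n.
Proof. by rewrite /depth; case: ex_minnP => m _ H /H. Qed.

Lemma depth_walk v : walk_le e r v (depth v).
Proof. by apply/dist_leP; rewrite /depth; case: ex_minnP. Qed.

Lemma depth_edge x y : e x y -> depth y <= (depth x).+1.
Proof.
move=> exy; apply: depth_min; apply/dist_leP.
have [p [sp pp lp]] := depth_walk x; exists (rcons p y).
by rewrite size_rcons rcons_path pp lp exy last_rcons.
Qed.

Lemma depth_root : depth r = 0.
Proof. by apply/eqP; rewrite -leqn0; apply: depth_min; apply/dist_leP; exists [::]. Qed.

Lemma depth_eq0 v : (depth v == 0) = (v == r).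
Proof.
apply/idP/idP => [/eqP d0|/eqP ->]; last by rewrite depth_root.
have [[|x p] [sp _ lp]] := depth_walk v; first by rewrite -lp.
by rewrite d0 in sp.
Qed.

Lemma exists_parent v : v != r -> exists w, e v w && ((depth w).+1 == depth v).
Proof.
move=> vr; have [p [sp pp lp]] := depth_walk v.
case/lastP: p sp pp lp => [|q z] sp pp lp; first by rewrite -lp eqxx in vr.
rewrite last_rcons in lp; subst z.
move: pp; rewrite rcons_path => /andP[pq ew].
exists (last r q); rewrite e_sym ew /=.
have dq : depth (last r q) <= size q.
  by apply: depth_min; apply/dist_leP; exists q.
have := depth_edge ew; rewrite size_rcons in sp.
by move=> dv; apply/eqP; lia.
Qed.

Definition parent v := odflt v [pick w | e v w && ((depth w).+1 == depth v)].

Lemma parent_root : parent r = r.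
Proof. by rewrite /parent; case: pickP => // w /andP[_]; rewrite depth_root. Qed.

Lemma parent_spec v : v != r -> e v (parent v) /\ (depth (parent v)).+1 = depth v.
Proof.
move=> vr; rewrite /parent; case: pickP => [w /andP[ew /eqP dw] //|none].
by have [w] := exists_parent vr; rewrite none.
Qed.

Lemma depth_parent v : depth (parent v) = (depth v).-1.
Proof.
have [->|vr] := eqVneq v r; first by rewrite parent_root depth_root.
by have [_ <-] := parent_spec vr.
Qed.

Definition anc n v := iter n parent v.

Lemma depth_anc n v : depth (anc n v) = depth v - n.
Proof. by elim: n => [|n IH]; rewrite ?subn0 // /anc iterS depth_parent IH subnS. Qed.

Lemma anc_root n : anc n r = r.
Proof. by elim: n => // n IH; rewrite /anc iterS -/(anc n r) IH parent_root. Qed.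

Lemma ancD m n v : anc m (anc n v) = anc (m + n) v.
Proof. by rewrite /anc iterD. Qed.

Lemma anc_depth v : anc (depth v) v = r.
Proof. by apply/eqP; rewrite -depth_eq0 depth_anc subnn. Qed.

Lemma anc_fixed_root m n v : m < n -> anc m v = anc n v -> anc m v = r.
Proof.
move=> mn /(congr1 depth); rewrite !depth_anc => dmn.
by apply/eqP; rewrite -depth_eq0 depth_anc; apply/eqP; lia.
Qed.

Lemma path_to_root n v : n <= depth v -> path e v (traject parent (parent v) n).
Proof.
elim: n v => [|n IH] v dv //=.
have vr : v != r by rewrite -depth_eq0 -lt0n (leq_trans _ dv).
by have [-> _] := parent_spec vr; rewrite IH // depth_parent; lia.
Qed.

Lemma uniq_path_to_root m v : m <= (depth v).+1 -> uniq (traject parent v m).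
Proof.
elim: m v => [|m IH] v dv //=.
rewrite IH ?depth_parent; last lia.
rewrite andbT; apply/negP => /trajectP [i im].
by move/(congr1 depth); rewrite -iterSr -/(anc _ _) depth_anc; lia.
Qed.

(* Both the parent chain of y and the edge to x followed by the parent chain
   of x are uniq paths from y to the root. *)
Lemma parent_of_edge x y : e x y -> depth x <= depth y -> parent y = x.
Proof.
move=> exy dxy.
have yr : y != r.
  apply: contraTneq dxy => yr; move: exy; rewrite yr depth_root -ltnNge lt0n.
  by rewrite depth_eq0; apply: contraTneq => ->; rewrite e_irr.
have chain : traject parent (parent y) (depth y) =
             x :: traject parent (parent x) (depth x).
  apply: (@uniq_path_eq y).
  - by rewrite path_to_root.
  - by rewrite /= e_sym exy path_to_root.
  - by rewrite -trajectS uniq_path_to_root.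
  - rewrite -trajectS cons_uniq uniq_path_to_root // andbT.
    apply/negP => /trajectP [i im yi].
    have i0 : i = 0 by move: (congr1 depth yi); rewrite -/(anc _ _) depth_anc; lia.
    by move: exy; rewrite yi i0 e_irr.
  - by rewrite /= !last_traject -!/(anc _ _) !anc_depth.
by case: (depth y) chain yr => [|n] [] // _; rewrite -depth_eq0 => /eqP.
Qed.

Lemma edge_parent x y : e x y -> parent x = y \/ parent y = x.
Proof.
move=> exy; have [dxy|dyx] := leqP (depth x) (depth y).
  by right; apply: parent_of_edge.
by left; apply: parent_of_edge; rewrite 1?e_sym // ltnW.
Qed.

Lemma walk_le_anc i x : walk_le e x (anc i x) i.
Proof.
elim: i => [|i [p [sp pp lp]]]; first by exists [::].
rewrite /anc iterS -/(anc i x).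
have [xr|xr] := eqVneq (anc i x) r.
  by rewrite xr parent_root; exists p; rewrite -xr; split => //; apply: leqW.
exists (rcons p (parent (anc i x))).
by rewrite size_rcons rcons_path pp lp last_rcons (parent_spec xr).1.
Qed.

Lemma walk_le_from_anc j v : walk_le e (anc j v) v j.
Proof.
elim: j v => [|j IH] v; first by exists [::].
rewrite /anc iterSr -/(anc j (parent v)).
have [vr|vr] := eqVneq v r.
  have [p [sp pp lp]] := IH v; rewrite vr parent_root.
  by exists p; split; rewrite -?vr //; apply: leqW.
have [p [sp pp lp]] := IH (parent v); exists (rcons p v).
by rewrite size_rcons rcons_path pp lp last_rcons e_sym (parent_spec vr).1.
Qed.

Definition common_anc_within k u v := exists i j, i + j <= k /\ anc i u = anc j v.

Lemma common_anc_within_sym k u v :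
  common_anc_within k u v -> common_anc_within k v u.
Proof. by case=> i [j [ij h]]; exists j, i; split; [lia|]. Qed.

Lemma path_common_anc u p : path e u p -> common_anc_within (size p) u (last u p).
Proof.
elim: p u => [|x p IH] u /=; first by move=> _; exists 0, 0.
case/andP=> eux /IH [i [j [hij h]]].
have [pu|px] := edge_parent eux.
  by exists i.+1, j; split; [lia | rewrite /anc iterSr pu].
case: i hij h => [|i] hij h.
  by exists 0, j.+1; split; [lia | rewrite /anc iterS -/(anc j _) -h -px].
by exists i, j; split; [lia | rewrite -h /anc iterSr px].
Qed.

Lemma graph_pow_anc k u v :
  graph_pow e k u v <-> u != v /\ common_anc_within k u v.
Proof.
split.
  case/andP=> uv /dist_leP [p [sp pp lp]]; split => //.
  have [i [j [hij h]]] := path_common_anc pp.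
  by exists i, j; rewrite -lp; split => //; lia.
case=> uv [i [j [hij h]]]; apply/andP; split => //; apply/dist_leP.
rewrite -(subnKC hij); apply: (@walk_le_cat _ _ _ v); last by exists [::].
apply: (@walk_le_cat _ _ _ (anc i u)); first exact: walk_le_anc.
by rewrite h; exact: walk_le_from_anc.
Qed.

Definition ancestor x w := x \in traject parent w (depth w).+1.

Lemma ancestorP x w : reflect (exists s, anc s w = x) (ancestor x w).
Proof.
apply: (iffP trajectP) => [[i _ ->]|[s <-]]; first by exists i.
have [sw|sw] := leqP s (depth w); first by exists s.
exists (depth w) => //; rewrite -(subnK (ltnW sw)) -ancD.
by rewrite anc_depth anc_root -/(anc _ w) anc_depth.
Qed.

Lemma ancestor_anc s v : ancestor (anc s v) v.
Proof. by apply/ancestorP; exists s. Qed.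

Lemma ancestor_trans x y z : ancestor x y -> ancestor y z -> ancestor x z.
Proof. by move=> /ancestorP [s <-] /ancestorP [t <-]; rewrite ancD ancestor_anc. Qed.

(* The root-to-vertex path, read as a word over the codes of the vertices. *)
Definition key v : seqlexi nat := rev (map pickle (traject parent v (depth v))).

Lemma size_key v : size (key v) = depth v.
Proof. by rewrite size_rev size_map size_traject. Qed.

Lemma key_anc s v : s <= depth v ->
  key v = key (anc s v) ++ rev (map pickle (traject parent v s)).
Proof.
move=> sv; rewrite /key depth_anc.
by rewrite -{1}(subnKC sv) trajectD map_cat rev_cat.
Qed.

Lemma key_inj : injective key.
Proof.
move=> u v kuv; have := congr1 size kuv; rewrite !size_key => duv.
case du: (depth u) duv => [|n] duv.
  by move/eqP: du; rewrite depth_eq0 => /eqP ->; apply/esym/eqP; rewrite -depth_eq0 -duv.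
move: kuv; rewrite /key du -duv !trajectS /= !rev_cons => /(congr1 (last 0)).
by rewrite !last_rcons => /(pcan_inj pickleK).
Qed.

Lemma ancestor_key x w : ancestor x w <-> exists q, key w = key x ++ q.
Proof.
split.
  case/ancestorP => s <-; have [sw|sw] := leqP s (depth w).
    by rewrite (key_anc sw); eexists.
  rewrite -(subnK (ltnW sw)) -ancD anc_depth anc_root.
  by exists (key w); rewrite /key depth_root.
case=> q kw; apply/ancestorP; exists (size q).
have := congr1 size kw; rewrite size_cat !size_key => dw.
have qw : size q <= depth w by lia.
move: kw; rewrite (key_anc qw) => /eqP; rewrite eqseq_cat; last first.
  by rewrite !size_key depth_anc; lia.
by case/andP => /eqP /key_inj.
Qed.

Definition pos := rank key.

Definition endp x := \max_(w | ancestor x w) pos w.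

Lemma pos_inj : injective pos.
Proof. exact: rank_inj key_inj. Qed.

Lemma ancestor_pos x w : ancestor x w -> pos x <= pos w.
Proof. by case/ancestor_key => q kw; rewrite /pos rank_leE kw lexi_catr. Qed.

Lemma pos_le_endp x w : ancestor x w -> pos w <= endp x.
Proof. by move=> xw; apply: (leq_bigmax_cond (P := ancestor x)). Qed.

Lemma subtree_interval x w : pos x <= pos w -> pos w <= endp x -> ancestor x w.
Proof.
move=> xw wend.
have [|z xz ez] := @eq_bigmax_cond _ (ancestor x) pos.
  by apply/card_gt0P; exists x; apply: (ancestor_anc 0).
move: xw wend; rewrite /endp ez /pos !rank_leE => xw wz.
have [q kz] := (ancestor_key x z).1 xz.
by apply/ancestor_key; apply: (lexi_prefix (q := q)); rewrite -?kz.
Qed.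

Lemma pos_lt_ancestor a u v : ancestor a v -> ~~ ancestor a u ->
  pos u < pos v -> pos u < pos a.
Proof.
move=> av au uv; rewrite ltnNge; apply: contra au => au.
exact: subtree_interval au (leq_trans (ltnW uv) (pos_le_endp av)).
Qed.

Lemma endp_lt_ancestor a b u v : ancestor a v -> ~~ ancestor a u ->
  ancestor b u -> ~~ ancestor b v -> pos u < pos v -> endp b < pos a.
Proof.
move=> av au bu bv uv; have ua := pos_lt_ancestor av au uv.
rewrite ltnNge; apply: contra bv => ab; apply: ancestor_trans av.
exact: subtree_interval (leq_trans (ancestor_pos bu) (ltnW ua)) ab.
Qed.

Definition coord_cond k u v i :=
  ancestor (anc (k - i) v) u || (if i is i'.+1 then ancestor (anc i' u) v else false).

(* As i runs from 0 to k, the (k-i)-th ancestor of v stops being an ancestor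
   of u at some step m -> m+1; then the m-th ancestor of u is an ancestor of
   v, and the two chains of ancestors meet within k steps. *)
Lemma common_anc_coordwise k u v : pos u < pos v ->
  common_anc_within k u v <-> forall i, i <= k -> coord_cond k u v i.
Proof.
move=> uv; split.
  case=> i0 [j0 [ij0 h]] i ik; rewrite /coord_cond.
  have [jl|jl] := leqP j0 (k - i).
    by rewrite -(subnK jl) -ancD -h ancD ancestor_anc.
  case: i ik jl => [|i] ik jl; first lia.
  apply/orP; right; apply/ancestorP; exists (i - i0 + j0).
  by rewrite -ancD -h ancD subnK //; lia.
move=> cond; pose P i := ancestor (anc (k - i) v) u.
have P0 : P 0 by have := cond 0 (leq0n k); rewrite /coord_cond orbF.
have Pk : ~~ P k.
  by rewrite /P subnn; apply: contraTN uv => /ancestor_pos; rewrite -leqNgt.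
have [m mk /andP[/ancestorP[s hs] Pm1]] := nat_pred_switch P0 Pk.
have /ancestorP[t ht] : ancestor (anc m u) v.
  by have := cond m.+1 mk; rewrite /coord_cond -/(P m.+1) (negbTE Pm1).
have [sm|ms] := leqP s m; first by exists s, (k - m); split; [lia|].
have [tk|kt] := leqP t (k - m); first by exists m, t; split; [lia|].
have vr : anc (k - m) v = r.
  apply: (@anc_fixed_root _ (s - m + t)); first lia.
  by rewrite -hs -[s in anc s u](subnK (ltnW ms)) -ancD -ht ancD.
exists m, (k - m); split; first lia.
by rewrite vr -ht -(subnK (ltnW kt)) -ancD vr anc_root.
Qed.

Definition box_lo k i v := pos (anc (k - i) v).
Definition box_hi i v := if i is i'.+1 then endp (anc i' v) else pos v.

Lemma pos_le_box_hi i v : pos v <= box_hi i v.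
Proof. by case: i => //= i; apply: pos_le_endp; apply: ancestor_anc. Qed.

Lemma box_lo_le_hi k i u v : pos u <= pos v -> box_lo k i u <= box_hi i v.
Proof.
move=> uv; apply: leq_trans (ancestor_pos (ancestor_anc _ _)) _.
exact: leq_trans uv (pos_le_box_hi _ _).
Qed.

Lemma box_lo_le_hiE k i u v : pos u < pos v ->
  (box_lo k i v <= box_hi i u) = coord_cond k u v i.
Proof.
move=> uv; rewrite /box_lo /coord_cond; apply/idP/idP.
  apply: contraTT; rewrite negb_or -ltnNge => /andP[nav nau].
  case: i nav nau => [|i] nav nau /=.
    exact: pos_lt_ancestor (ancestor_anc _ _) nav uv.
  exact: endp_lt_ancestor (ancestor_anc _ _) nav (ancestor_anc _ _) nau uv.
case/orP => [au|].
  exact: leq_trans (ancestor_pos au) (pos_le_box_hi _ _).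
case: i => [|i] //= uv'.
exact: leq_trans (ancestor_pos (ancestor_anc _ _)) (pos_le_endp uv').
Qed.

Definition tree_box k v : box k.+1 := fun i => (INR (box_lo k i v), INR (box_hi i v)).
Arguments tree_box : clear implicits.

Lemma tree_boxes_meet k u v : pos u < pos v ->
  boxes_meet (tree_box k u) (tree_box k v) <->
  forall i : 'I_k.+1, box_lo k i v <= box_hi i u.
Proof.
move=> uv; split=> [meet i | le_vu i].
  by have /Rmax_le_Rmin[_ _ /INR_le + _] := meet i; lia.
apply/Rmax_le_Rmin; split; apply: le_INR.
- by have := box_lo_le_hi k i (leqnn (pos u)); lia.
- by have := box_lo_le_hi k i (ltnW uv); lia.
- by have := le_vu i; lia.
- by have := box_lo_le_hi k i (leqnn (pos v)); lia.
Qed.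

Lemma graph_pow_tree_box_lt k u v : pos u < pos v ->
  graph_pow e k u v <-> boxes_meet (tree_box k u) (tree_box k v).
Proof.
move=> uv; rewrite graph_pow_anc tree_boxes_meet // common_anc_coordwise //.
split=> [[_ cond] i | le_vu].
  by rewrite box_lo_le_hiE //; apply: cond; rewrite -ltnS.
split=> [|i ik]; first by apply: contraTneq uv => ->; rewrite ltnn.
by rewrite -box_lo_le_hiE // (le_vu (Ordinal (ik : i < k.+1))).
Qed.

Lemma tree_box_rep k : box_rep (graph_pow e k) k.+1.
Proof.
exists (tree_box k); split=> [v i|u v uv].
  by apply: le_INR; have := box_lo_le_hi k i (leqnn (pos v)); lia.
have [lt_uv|lt_vu|eq_uv] := ltngtP (pos u) (pos v).
- exact: graph_pow_tree_box_lt.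
- have pow_sym : graph_pow e k u v <-> graph_pow e k v u.
    by rewrite !graph_pow_anc eq_sym; split=> -[-> /common_anc_within_sym].
  have meet_sym : boxes_meet (tree_box k u) (tree_box k v) <->
                  boxes_meet (tree_box k v) (tree_box k u).
    by split=> meet i; rewrite Rmax_comm Rmin_comm; apply: meet.
  by rewrite pow_sym meet_sym; apply: graph_pow_tree_box_lt.
- by rewrite (pos_inj eq_uv) eqxx in uv.
Qed.

End Tree.

(* The construction also works for k = 0. *)
Theorem theorem1 (T : finType) (e : rel T) (k : nat) :
  is_tree e -> (1 <= k)%N -> boxicity_le (graph_pow e k) k.+1.
Proof.
case=> [[e_sym e_irr] /card_gt0P [r _] e_conn e_acyc] _.
by exists k.+1; split=> //; exact: tree_box_rep e_sym e_irr e_acyc e_conn r k.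
Qed.
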